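(* The set of infinite words accepted by $\widehat{\mathcal{T}_{p/q}}$ is the topological closure (in $B^{\omega}$ with the product topology) of the set of span-words $\{M_n\ominus\mu_n : n\in\mathbb{N}\}$.
   Context: Let $p>q>1$ be coprime integers, $A_p=\{0,\dots,p-1\}$, $A_q=\{0,\dots,q-1\}$ and $B=\{p-(2q-1),\dots,p-1\}$. For $n\in\mathbb{N}$ and $a\in\mathbb{Z}$, let $\tau(n,a)=\frac{np+a}{q}$, defined only when $q$ divides $np+a$. Let $\mathcal{T}_{p/q}$ be the deterministic automaton with state set $\mathbb{N}$, alphabet $A_p$, initial state $0$, and transitions $n\xrightarrow{a}\tau(n,a)$ for $a\in A_p$ with $\tau(n,a)$ defined. The minimal word $\mu_n\in A_q^{\omega}$ (resp. maximal word $M_n\in\{p-q,\dots,p-1\}^{\omega}$) is the unique infinite word over $A_q$ (resp. over $\{p-q,\dots,p-1\}$) labelling a path of $\mathcal{T}_{p/q}$ starting at $n$. The span-word of $n$ is $M_n\ominus\mu_n$, with $\ominus$ letter-wise subtraction. Let $\widehat{\mathcal{T}_{p/q}}$ be the deterministic automaton with state set $\mathbb{N}$, alphabet $B$, initial state $0$, and transitions $n\xrightarrow{a}\tau(n,a)$ for $a\in B$ with $\tau(n,a)$ defined; an infinite word is accepted if each of its finite prefixes labels a path from $0$. *)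

From Stdlib Require Import ZArith.
Open Scope Z_scope.

Definition inB (p q : Z) (a : Z) : Prop := p - (2*q - 1) <= a <= p - 1.
Definition inAq (q : Z) (a : Z) : Prop := 0 <= a <= q - 1.
Definition inMax (p q : Z) (a : Z) : Prop := p - q <= a <= p - 1.

(* Transition n --a--> m of T_{p/q} between states of N:
   tau(n,a) = (n p + a)/q is defined (q divides n p + a) and equals m;
   states are natural numbers, so m >= 0. *)
Definition trans (p q : Z) (n a m : Z) : Prop :=
  0 <= m /\ q * m = n * p + a.

Definition labels_path (p q : Z) (n : nat) (w : nat -> Z) : Prop :=
  exists st : nat -> Z, st O = Z.of_nat n /\
    forall i : nat, trans p q (st i) (w i) (st (S i)).

Definition prefix_labels_path (p q : Z) (n : nat) (w : nat -> Z) (k : nat) : Prop :=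
  exists st : nat -> Z, st O = Z.of_nat n /\
    forall i : nat, (i < k)%nat -> trans p q (st i) (w i) (st (S i)).

(* mu is the minimal word of n: the (unique) word over A_q labelling a path from n. *)
Definition is_minimal_word (p q : Z) (n : nat) (mu : nat -> Z) : Prop :=
  (forall i, inAq q (mu i)) /\ labels_path p q n mu.

(* M is the maximal word of n: the (unique) word over {p-q..p-1} labelling a path from n. *)
Definition is_maximal_word (p q : Z) (n : nat) (M : nat -> Z) : Prop :=
  (forall i, inMax p q (M i)) /\ labels_path p q n M.

Definition is_span_word (p q : Z) (s : nat -> Z) : Prop :=
  exists (n : nat) (M mu : nat -> Z),
    is_maximal_word p q n M /\ is_minimal_word p q n mu /\
    forall i, s i = M i - mu i.

Definition accepted_hat (p q : Z) (w : nat -> Z) : Prop :=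
  (forall i, inB p q (w i)) /\
  forall k : nat, prefix_labels_path p q O w k.

(* Closure of a set S of words in B^omega with the product topology
   (B discrete): w in B^omega lies in the closure of S iff every basic
   open neighbourhood of w (cylinder fixed by a finite prefix) meets S. *)
Definition in_closure_Bomega (p q : Z) (S : (nat -> Z) -> Prop) (w : nat -> Z) : Prop :=
  (forall i, inB p q (w i)) /\
  forall k : nat, exists s, S s /\ (forall i, (i < k)%nat -> s i = w i).

(* From every state, each window [lo, lo+q-1] of q consecutive letters contains
   exactly one letter with a transition, because the condition is a congruence
   modulo q.  Shifting a state by t q^k does not change the first k letters of
   its window word, and since p is invertible modulo q^k every prefix over A_q
   is the prefix of some minimal word.  For an accepted word w with path d from
   0, choose n whose minimal word starts with c_i = max(0, p-q-w_i); then the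
   states mu-path + d form a path from n with labels c_i + w_i in {p-q..p-1},
   which must be the maximal path, so the span-word of n starts with w.
   Conversely, subtracting the minimal path of n from its maximal path gives a
   path from 0 labelled by the span-word. *)
From Stdlib Require Import ZArith Znumtheory Lia.
Open Scope Z_scope.

Section WindowWords.
Variables p q : Z.
Hypothesis q_gt1 : 1 < q.
Hypothesis q_lt_p : q < p.

(* The unique transition from [m] whose label lies in [lo, lo+q-1]. *)
Definition wletter (lo m : Z) : Z := lo + (-(m*p) - lo) mod q.
Definition wsucc (lo m : Z) : Z := - ((-(m*p) - lo) / q).

Lemma wsucc_spec lo m :
  q * wsucc lo m = m*p + wletter lo m /\ lo <= wletter lo m <= lo + q - 1.
Proof.
  unfold wsucc, wletter.
  pose proof (Z_div_mod_eq_full (-(m*p) - lo) q).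
  pose proof (Z.mod_pos_bound (-(m*p) - lo) q ltac:(lia)). lia.
Qed.

Lemma wsucc_unique lo m m' a :
  q * m' = m*p + a -> lo <= a <= lo + q - 1 -> a = wletter lo m /\ m' = wsucc lo m.
Proof.
  intros Hm' Ha. destruct (wsucc_spec lo m) as [E B].
  assert (m' - wsucc lo m = 0) by nia. nia.
Qed.

Lemma wsucc_shift lo m T :
  wletter lo (m + T*q) = wletter lo m /\ wsucc lo (m + T*q) = wsucc lo m + T*p.
Proof.
  destruct (wsucc_spec lo m) as [E B].
  destruct (wsucc_unique lo (m + T*q) (wsucc lo m + T*p) (wletter lo m))
    as [A1 A2]; [nia | lia |].
  split; congruence.
Qed.

Lemma succ_nonneg m m' a : 0 <= m -> -q < a -> q * m' = m*p + a -> 0 <= m'.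
Proof. intros Hm Ha E. nia. Qed.

Fixpoint wstate (lo n : Z) (i : nat) : Z :=
  match i with O => n | S i => wsucc lo (wstate lo n i) end.

Definition wword (lo n : Z) (i : nat) : Z := wletter lo (wstate lo n i).

Lemma wstate_step lo n i :
  q * wstate lo n (S i) = wstate lo n i * p + wword lo n i.
Proof. apply wsucc_spec. Qed.

Lemma wword_window lo n i : lo <= wword lo n i <= lo + q - 1.
Proof. apply wsucc_spec. Qed.

Lemma wstate_S lo n i : wstate lo n (S i) = wstate lo (wsucc lo n) i.
Proof. induction i as [|i IH]; simpl in *; congruence. Qed.

Lemma wstate_nonneg lo n i : 0 <= lo -> 0 <= n -> 0 <= wstate lo n i.
Proof.
  intros Hlo Hn. induction i as [|i IH]; [exact Hn|].
  apply (succ_nonneg (wstate lo n i) _ (wword lo n i)); trivial.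
  - pose proof (wword_window lo n i). lia.
  - apply wstate_step.
Qed.

Lemma wword_labels_path lo (n : nat) :
  0 <= lo -> labels_path p q n (wword lo (Z.of_nat n)).
Proof.
  intros Hlo. exists (wstate lo (Z.of_nat n)). split; [reflexivity|].
  intros i. split; [apply wstate_nonneg; lia | apply wstate_step].
Qed.

Lemma minimal_wword (n : nat) : is_minimal_word p q n (wword 0 (Z.of_nat n)).
Proof.
  split; [|apply wword_labels_path; lia].
  intros i. pose proof (wword_window 0 (Z.of_nat n) i). unfold inAq. lia.
Qed.

Lemma maximal_wword (n : nat) : is_maximal_word p q n (wword (p - q) (Z.of_nat n)).
Proof.
  split; [|apply wword_labels_path; lia].
  intros i. pose proof (wword_window (p - q) (Z.of_nat n) i). unfold inMax. lia.
Qed.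

Lemma wstate_unique lo x st a k :
  st O = x ->
  (forall i, (i < k)%nat -> q * st (S i) = st i * p + a i /\ lo <= a i <= lo + q - 1) ->
  forall i, (i < k)%nat -> a i = wword lo x i /\ st (S i) = wstate lo x (S i).
Proof.
  intros Hst0 Hst. induction i as [|i IH]; intros Hi.
  - destruct (Hst O Hi) as [E B]. rewrite Hst0 in E. exact (wsucc_unique lo x _ _ E B).
  - destruct IH as [_ IH]; [lia|]. destruct (Hst (S i) Hi) as [E B].
    rewrite IH in E. exact (wsucc_unique lo _ _ _ E B).
Qed.

Lemma pow_sub_S (x : Z) (i k : nat) : (i < k)%nat ->
  x ^ (Z.of_nat k - Z.of_nat i) = x ^ (Z.of_nat k - Z.of_nat (S i)) * x.
Proof.
  intros Hik.
  replace (Z.of_nat k - Z.of_nat i) with (Z.succ (Z.of_nat k - Z.of_nat (S i))) by lia.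
  rewrite Z.pow_succ_r by lia. ring.
Qed.

Lemma wstate_shift lo n t k i : (i <= k)%nat ->
  wstate lo (n + t * q ^ Z.of_nat k) i
  = wstate lo n i + t * p ^ Z.of_nat i * q ^ (Z.of_nat k - Z.of_nat i).
Proof.
  induction i as [|i IH]; intros Hi.
  - cbn [wstate]. rewrite Z.sub_0_r, Z.pow_0_r. ring.
  - cbn [wstate]. rewrite IH by lia.
    rewrite (pow_sub_S q i k), Z.mul_assoc by lia.
    rewrite (proj2 (wsucc_shift _ _ _)), Nat2Z.inj_succ, Z.pow_succ_r by lia. ring.
Qed.

Lemma wword_shift lo n t k i : (i < k)%nat ->
  wword lo (n + t * q ^ Z.of_nat k) i = wword lo n i.
Proof.
  intros Hi. unfold wword. rewrite wstate_shift by lia.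
  rewrite (pow_sub_S q i k), Z.mul_assoc by lia.
  apply wsucc_shift.
Qed.

Hypothesis coprime_pq : Z.gcd p q = 1.

Lemma rel_prime_pow e : rel_prime p (q ^ Z.of_nat e).
Proof.
  induction e as [|e IH].
  - apply rel_prime_sym, rel_prime_1.
  - rewrite Nat2Z.inj_succ, Z.pow_succ_r by lia.
    apply rel_prime_mult; [apply Zgcd_1_rel_prime, coprime_pq | exact IH].
Qed.

Lemma wword_prescribe_prefix lo k (c : nat -> Z) :
  (forall i, (i < k)%nat -> lo <= c i <= lo + q - 1) ->
  exists n, forall i, (i < k)%nat -> wword lo n i = c i.
Proof.
  revert c. induction k as [|k IH]; intros c Hc.
  { exists 0. intros; lia. }
  destruct (IH (fun i => c (S i))) as [n1 Hn1]; [intros; apply Hc; lia|].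
  destruct (Z.gcd_bezout p (q ^ Z.of_nat (S k)) 1) as [u [v Huv]].
  { apply Zgcd_1_rel_prime, rel_prime_pow. }
  rewrite Nat2Z.inj_succ, Z.pow_succ_r in Huv by lia.
  (* n is chosen so that its first transition has label c 0 and leads to a
     state congruent to n1 modulo q^k. *)
  set (t := v * (c O - q*n1)).
  exists (u * (q*n1 - c O)).
  assert (E : q * (n1 + t * q ^ Z.of_nat k) = (u * (q*n1 - c O)) * p + c O).
  { unfold t. set (X := q ^ Z.of_nat k) in *.
    replace (q * (n1 + v * (c O - q * n1) * X))
      with (q*n1 + (c O - q*n1) * (v * (q * X))) by ring.
    replace (v * (q * X)) with (1 - u * p) by lia. ring. }
  destruct (wsucc_unique lo _ _ _ E) as [A1 A2]; [apply Hc; lia|].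
  intros [|i] Hi.
  - symmetry. exact A1.
  - unfold wword. rewrite wstate_S, <- A2. fold (wword lo (n1 + t * q ^ Z.of_nat k) i).
    rewrite wword_shift by lia. apply Hn1. lia.
Qed.

Lemma wword_prescribe_prefix_nat lo k (c : nat -> Z) :
  (forall i, (i < k)%nat -> lo <= c i <= lo + q - 1) ->
  exists n : nat, forall i, (i < k)%nat -> wword lo (Z.of_nat n) i = c i.
Proof.
  intros Hc. destruct (wword_prescribe_prefix lo k c Hc) as [n Hn].
  assert (Hpow : 0 < q ^ Z.of_nat k) by (apply Z.pow_pos_nonneg; lia).
  exists (Z.to_nat (n + Z.abs n * q ^ Z.of_nat k)).
  intros i Hi. rewrite Z2Nat.id by nia. rewrite wword_shift by exact Hi. auto.
Qed.

Lemma span_word_labels_path n M mu :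
  is_maximal_word p q n M -> is_minimal_word p q n mu ->
  labels_path p q O (fun i => M i - mu i).
Proof.
  intros [HM [sM [sM0 HsM]]] [Hmu [sm [sm0 Hsm]]].
  assert (Hstep : forall i, q * (sM (S i) - sm (S i)) = (sM i - sm i) * p + (M i - mu i)).
  { intros i. destruct (HsM i) as [_ E1], (Hsm i) as [_ E2]. lia. }
  (* Labels of span-words exceed -q, which keeps the difference states nonnegative. *)
  assert (Hnonneg : forall i, 0 <= sM i - sm i).
  { induction i as [|i IH]; [lia|].
    apply (succ_nonneg _ _ (M i - mu i) IH); [|apply Hstep].
    specialize (HM i). specialize (Hmu i). unfold inMax, inAq in *. lia. }
  exists (fun i => sM i - sm i). split; [simpl; lia|].
  intros i. split; [apply Hnonneg | apply Hstep].
Qed.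

Lemma closure_accepted_hat w :
  in_closure_Bomega p q (is_span_word p q) w -> accepted_hat p q w.
Proof.
  intros [HB Hcl]. split; [exact HB|]. intros k.
  destruct (Hcl k) as [s [[n [M [mu [HM [Hmu Hs]]]]] Hsw]].
  destruct (span_word_labels_path n M mu HM Hmu) as [st [Hst0 Hst]].
  exists st. split; [exact Hst0|].
  intros i Hi. rewrite <- Hsw, Hs by exact Hi. apply Hst.
Qed.

Lemma accepted_hat_closure w :
  accepted_hat p q w -> in_closure_Bomega p q (is_span_word p q) w.
Proof.
  intros [HB Hpre]. split; [exact HB|]. intros k.
  destruct (Hpre k) as [d [Hd0 Hd]].
  set (c i := Z.max 0 (p - q - w i)).
  destruct (wword_prescribe_prefix_nat 0 k c) as [n Hn].
  { intros i _. specialize (HB i). unfold inB, c in *. lia. }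
  set (N := Z.of_nat n).
  exists (fun i => wword (p - q) N i - wword 0 N i). split.
  { exists n, (wword (p - q) N), (wword 0 N).
    split; [apply maximal_wword | split; [apply minimal_wword | reflexivity]]. }
  assert (Hmax : forall i, (i < k)%nat -> c i + w i = wword (p - q) N i).
  { intros i Hi.
    refine (proj1 (wstate_unique (p - q) N (fun i => wstate 0 N i + d i)
                    (fun i => c i + w i) k _ _ i Hi)).
    - simpl. rewrite Hd0. lia.
    - intros j Hj. destruct (Hd j Hj) as [_ Ed].
      pose proof (wstate_step 0 N j) as Em. rewrite Hn in Em by exact Hj.
      specialize (HB j). unfold inB, c in *. split; nia. }
  intros i Hi. rewrite <- Hmax, Hn by exact Hi. ring.
Qed.

End WindowWords.

Theorem mainTheorem9 (p q : Z) (Hq : 1 < q) (Hpq : q < p) (Hcop : Z.gcd p q = 1) :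
  forall w : nat -> Z,
    accepted_hat p q w <-> in_closure_Bomega p q (is_span_word p q) w.
Proof.
  intros w. split.
  - exact (accepted_hat_closure p q Hq Hpq Hcop w).
  - exact (closure_accepted_hat p q Hq Hpq w).
Qed.
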